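(* Let $n,m$ be positive integers. For a dominant region $R\in\mathcal{R}^m_n$ with Shi tableau entries $k_{i,j}=k_{i,j}(R)$, $1\le i\le j\le n$, define $\varphi_n(R)=(\lambda_1,\dots,\lambda_n)$ with $\lambda_i=\sum_{j=i}^n k_{i,j}$. Then $\varphi_n$ is a bijection from $\mathcal{R}^m_n$ onto $\mathcal{P}^m_n$.
   Context: Type $A_n$: $V=\{x\in\mathbb{R}^{n+1}:\sum x_i=0\}$, positive roots $\alpha_{ij}=\varepsilon_i-\varepsilon_{j+1}$ ($1\le i\le j\le n$), $H_{\alpha,k}=\{v\in V:\langle v,\alpha\rangle=k\}$. $\mathrm{Cat}^m(A_n)$ is the arrangement of the $H_{\alpha,k}$, $\alpha$ positive, $0\le k\le m$; $\mathcal{R}^m_n$ is the set of its dominant regions (regions contained in $\{v:\langle v,\alpha\rangle\ge0\ \forall\alpha>0\}$). For $R\in\mathcal{R}^m_n$ and $1\le i\le j\le n$, $k_{i,j}(R)$ is the unique integer $k\in\{0,\dots,m\}$ such that for all $x\in R$: $k\le\langle\alpha_{ij},x\rangle\le k+1$ if $k<m$, and $\langle\alpha_{ij},x\rangle\ge m$ if $k=m$ (i.e. the number of hyperplanes $H_{\alpha_{ij},t}$, $1\le t\le m$, separating $R$ from the origin). The collection $\{k_{i,j}(R)\}$ is the Shi tableau of $R$. $\mathcal{P}^m_n$ is the set of integer partitions $(\lambda_1\ge\cdots\ge\lambda_n\ge0)$ with $\lambda_i\le m(n-i+1)$. *)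

From HB Require Import structures.
From mathcomp Require Import all_boot all_order all_algebra.
From mathcomp Require Import all_classical all_reals all_analysis.
Unset Printing Implicit Defensive.
Import Order.TTheory GRing.Theory Num.Theory.
Import numFieldTopology.Exports numFieldNormedType.Exports.
Local Open Scope classical_set_scope.
Local Open Scope ring_scope.

(* The ambient space R^{n+1} is 'rV[R]_(n.+1); coordinate eps_{a} (1-based a)
   is column index a-1.  Positive roots alpha_{ij} = eps_i - eps_{j+1},
   1 <= i <= j <= n, are indexed here 0-based by (i, j) with i <= j < n,
   so that <alpha, x> = x_(i) - x_(j+1) (0-based columns). *)

Definition root_pair (R : realType) (n : nat) (x : 'rV[R]_(n.+1)) (i j : nat) : R :=
  x ord0 (inord i) - x ord0 (inord j.+1).

Definition Vspace (R : realType) (n : nat) : set 'rV[R]_(n.+1) :=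
  [set x | \sum_(a < n.+1) x ord0 a = 0].

Definition cat_complement (R : realType) (n m : nat) : set 'rV[R]_(n.+1) :=
  [set x | Vspace R n x /\
     (forall i j k : nat, (i <= j)%N -> (j < n)%N -> (k <= m)%N ->
        root_pair R n x i j <> k%:R)].

Definition cat_regions (R : realType) (n m : nat) : set (set 'rV[R]_(n.+1)) :=
  [set S | exists x, cat_complement R n m x /\
                     S = connected_component (cat_complement R n m) x].

Definition dominant_cone (R : realType) (n : nat) : set 'rV[R]_(n.+1) :=
  [set x | Vspace R n x /\
     (forall i j : nat, (i <= j)%N -> (j < n)%N -> 0 <= root_pair R n x i j)].

Definition dominant_regions (R : realType) (n m : nat) : set (set 'rV[R]_(n.+1)) :=
  [set S | cat_regions R n m S /\ S `<=` dominant_cone R n].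

(* Shi tableau entry k_{i,j}(S): number of hyperplanes H_{alpha_ij, t},
   1 <= t <= m, separating S from the origin (i.e. S lies on the side
   <alpha_ij, x> > t, the origin being on the side < t). *)
Definition shi_k (R : realType) (n m : nat) (S : set 'rV[R]_(n.+1)) (i j : nat) : nat :=
  (\sum_(1 <= t < m.+1)
     nat_of_bool `[< exists2 x, S x & ((t%:R : R) < root_pair R n x i j)%R >])%N.

(* phi_n(S) = (lambda_1, ..., lambda_n), lambda_i = sum_{j=i}^n k_{i,j}
   (0-based: lambda_i = sum_{i <= j < n} k_{i,j}). *)
Definition phi_shi (R : realType) (n m : nat) (S : set 'rV[R]_(n.+1)) : seq nat :=
  [seq (\sum_(i <= j < n) shi_k R n m S i j)%N | i <- iota 0 n].

(* P^m_n: partitions lambda_1 >= ... >= lambda_n >= 0 with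
   lambda_i <= m (n - i + 1)  (0-based: lambda_i <= m (n - i)). *)
Definition shi_partitions (n m : nat) : set (seq nat) :=
  [set l | size l = n /\ sorted geq l /\
           (forall i : nat, (i < n)%N -> (nth 0%N l i <= m * (n - i))%N)].

(* A point [x] off the hyperplanes is recorded by the integers
   [levels_below m <alpha_ij, x>]. They are constant on the component of [x]
   (a continuous function avoiding a level on a connected set stays on one
   side of it), so they form its Shi tableau; and two points with the same
   tableau are joined by a segment avoiding every hyperplane, so they lie in
   the same region.
   Writing [<alpha_ij, x> = y_i - y_(j+1)], the entries are additive along
   rows. If the rows below [i] agree and row [i] had a larger entry for [x]
   at [j1] but for [x'] at [j2], the level [t2 - t1] would separate [x] and
   [x'] on [alpha_((j1+1) j2)]. So in each row all differences have the same
   sign, and equal row sums force equal tableaux: phi is injective.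
   For surjectivity the coordinates are chosen from [y_n] up. With the lower
   coordinates fixed, the row sum at [i] counts the points [y_(j+1) + t]
   ([i <= j < n], [1 <= t <= m]) below [y_i]; as [y_i] increases from
   [y_(i+1)] it runs through every value from [lambda_(i+1)] to [m (n - i)],
   so it can be made equal to [lambda_i]. *)

From Pilot Require Import Defs.
From HB Require Import structures.
From mathcomp Require Import all_boot all_order all_algebra.
From mathcomp Require Import all_classical all_reals all_analysis.
Import numFieldTopology.Exports numFieldNormedType.Exports.
From mathcomp Require Import lra zify.
Import Order.TTheory GRing.Theory Num.Theory.
Local Open Scope classical_set_scope.
Local Open Scope ring_scope.

Lemma connected_avoid_gt {T : topologicalType} {R : realType} [f : T -> R]
    [C : set T] [t : R] [x z : T] :
  continuous f -> connected C -> (forall w, C w -> f w != t) ->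
  C x -> C z -> t < f x -> t < f z.
Proof.
move=> cf cC ne Cx Cz tx; rewrite ltNge; apply/negP => zt.
have /connected_intervalP fC := connected_continuous_connected cC (continuous_subspaceT cf).
have [w Cw wt] : (f @` C) t.
  by apply: (fC (f z) (f x)); [exists z | exists x | rewrite zt ltW].
by move: (ne w Cw); rewrite wt eqxx.
Qed.

Lemma connected_segment (R : realType) (V : normedModType R) (x z : V) :
  connected [set x + s *: (z - x) | s in `[0%R, 1%R]].
Proof.
apply: connected_continuous_connected; first exact: segment_connected.
apply: continuous_subspaceT => s.
apply: (@continuousD _ _ _ (fun=> x) (fun s : R => s *: (z - x))).
  exact: cst_continuous.
exact: continuousZr_tmp.
Qed.

Lemma convex_gt (R : realFieldType) (a b c s : R) : 0 <= s <= 1 ->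
  c < a -> c < b -> c < a + s * (b - a).
Proof.
move=> /andP[s0 s1] ca cb; case: (leP a b) => ab.
  have : 0 <= s * (b - a) by apply: mulr_ge0; lra.
  lra.
have : 0 <= (1 - s) * (a - b) by apply: mulr_ge0; lra.
lra.
Qed.

Lemma convex_lt (R : realFieldType) (a b c s : R) : 0 <= s <= 1 ->
  a < c -> b < c -> a + s * (b - a) < c.
Proof.
move=> /andP[s0 s1] ac bc; case: (leP a b) => ab.
  have : 0 <= (1 - s) * (b - a) by apply: mulr_ge0; lra.
  lra.
have : 0 <= s * (a - b) by apply: mulr_ge0; lra.
lra.
Qed.

Section LevelsBelow.
Context {R : realFieldType} (m : nat).

Definition levels_below (v : R) : nat :=
  (\sum_(1 <= t < m.+1) nat_of_bool (t%:R < v)%R)%N.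

Lemma levels_below_le v : (levels_below v <= m)%N.
Proof.
apply: leq_trans (_ : \sum_(1 <= t < m.+1) 1 <= m)%N.
  by apply: leq_sum => t _; case: (_ < _).
by rewrite sum_nat_const_nat subn1 muln1.
Qed.

Lemma le_levels_below v w : v <= w -> (levels_below v <= levels_below w)%N.
Proof.
move=> vw; apply: leq_sum => t _.
by case: (boolP (t%:R < v)) => // /lt_le_trans ->.
Qed.

Lemma levels_below_le1 v : v <= 1 -> levels_below v = 0%N.
Proof.
move=> v1; rewrite /levels_below big_nat big1 // => t /andP[t1 _].
by rewrite ltNge (le_trans v1) // ler1n.
Qed.

Lemma levels_belowE d v : (1 <= d <= m)%N -> (d <= levels_below v)%N = (d%:R < v).
Proof.
move=> /andP[d1 dm]; rewrite /levels_below (@big_cat_nat _ _ _ d.+1) ?ltnS //=.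
have [dv | vd] := ltP d%:R v.
  rewrite big_nat (eq_bigr (fun=> 1%N)) => [|t /andP[_ td]].
    by rewrite -big_nat sum_nat_const_nat subn1 muln1 leq_addr.
  by rewrite (le_lt_trans _ dv) // ler_nat -ltnS.
have -> : (\sum_(d.+1 <= t < m.+1) nat_of_bool (t%:R < v)%R = 0)%N.
  by rewrite big_nat big1 // => t /andP[dt _]; rewrite ltNge (le_trans vd) // ler_nat ltnW.
rewrite addn0 big_nat_recr //= ltNge vd addn0; apply/negbTE; rewrite -ltnNge.
apply: leq_ltn_trans (_ : \sum_(1 <= t < d) 1 < d)%N.
  by apply: leq_sum => t _; case: (_ < _).
by rewrite sum_nat_const_nat muln1 subn1 prednK.
Qed.

Lemma levels_below_ltE d (v : R) : (1 <= d <= m)%N -> v != d%:R ->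
  (levels_below v < d)%N = (v < d%:R).
Proof.
by move=> d_range v_neq; rewrite ltnNge levels_belowE // -leNgt le_eqVlt (negbTE v_neq).
Qed.

End LevelsBelow.

Section CountBelow.
Context {R : realFieldType}.
Implicit Types (s : seq R) (y u : R).

Lemma exists_count_lt_sorted [s y] k : sorted <%R s -> y \notin s ->
    (count (fun z => z < y)%R s <= k <= size s)%N ->
  exists u, [/\ y < u, u \notin s & count (fun z => z < u) s = k].
Proof.
elim: s y k => [|x s IHs] y k /=.
  by rewrite leqn0 => _ _ /eqP->; exists (y + 1); split => //; lra.
move=> xs; have s_sorted := path_sorted xs.
have x_lt_s : all (fun z => x < z) s := order_path_min lt_trans xs.
have x_notin_s : x \notin s by apply/negP => /(allP x_lt_s); rewrite ltxx.
rewrite inE negb_or => /andP[y_neq_x y_notin_s].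
have [x_lt_y | y_le_x] := ltP x y.
  case: k => [|k]; first by rewrite add1n.
  rewrite add1n !ltnS => count_k.
  have [u [y_lt_u u_notin_s count_u]] := IHs y k s_sorted y_notin_s count_k.
  have x_lt_u := lt_trans x_lt_y y_lt_u.
  by exists u; rewrite inE negb_or count_u x_lt_u (gt_eqF x_lt_u).
have y_lt_x : y < x by rewrite lt_neqAle y_neq_x.
have count_s u : u <= x -> count (fun z => z < u) s = 0%N.
  move=> u_le_x; rewrite (eq_in_count (a2 := pred0)) ?count_pred0 // => z.
  by move=> /(allP x_lt_s) x_lt_z /=; rewrite ltNge (ltW (le_lt_trans u_le_x x_lt_z)).
rewrite add0n; case: k => [_|k /andP[_ k_le]].
  have u_lt_x : (y + x) / 2 < x by lra.
  exists ((y + x) / 2); split; first by lra.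
    by rewrite inE negb_or lt_eqF //=; apply/negP => /(allP x_lt_s); lra.
  by rewrite ltNge (ltW u_lt_x) count_s ?ltW.
have count_x : (count (fun z => z < x)%R s <= k <= size s)%N by rewrite count_s.
have [u [x_lt_u u_notin_s count_u]] := IHs x k s_sorted x_notin_s count_x.
by exists u; rewrite inE negb_or count_u x_lt_u (gt_eqF x_lt_u) (lt_trans y_lt_x x_lt_u).
Qed.

Lemma exists_count_lt [s y] k : uniq s -> y \notin s ->
    (count (fun z => z < y)%R s <= k <= size s)%N ->
  exists u, [/\ y < u, u \notin s & count (fun z => z < u) s = k].
Proof.
move=> s_uniq y_notin_s; rewrite -(count_sort <=%O) -(size_sort <=%O) => count_k.
have sorted_s : sorted <%R (sort <=%R s) by rewrite sort_lt_sorted.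
have y_notin_sort : y \notin sort <=%R s by rewrite mem_sort.
have [u [y_lt_u u_notin count_u]] := exists_count_lt_sorted k sorted_s y_notin_sort count_k.
by exists u; rewrite -(mem_sort <=%R) -(count_sort <=%R).
Qed.

End CountBelow.

Lemma ltn_sum_nat [a b j0 : nat] [F G : nat -> nat] : (a <= j0 < b)%N ->
    (forall j, (a <= j < b)%N -> (F j <= G j)%N) -> (F j0 < G j0)%N ->
  (\sum_(a <= j < b) F j < \sum_(a <= j < b) G j)%N.
Proof.
rewrite -mem_index_iota => j0_in le_FG lt_j0.
rewrite !(bigD1_seq j0) ?iota_uniq //= -addSn leq_add // big_seq_cond.
rewrite [X in (_ <= X)%N]big_seq_cond; apply: leq_sum => j /andP[j_in _].
by apply: le_FG; rewrite -mem_index_iota.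
Qed.

Section LevelPoints.
Context {R : realFieldType} (m : nat).
Implicit Types (cs : seq R) (u : R).

Definition level_points cs := [seq c + t%:R | c <- cs, t <- index_iota 1 m.+1].

Lemma count_level_points cs u :
  count (fun z => z < u) (level_points cs) = (\sum_(c <- cs) levels_below m (u - c))%N.
Proof.
rewrite count_flatten sumnE !big_map; apply: eq_bigr => c _.
rewrite count_map -sumn_count sumnE big_map; apply: eq_bigr => t _.
by rewrite /= ltrBrDl.
Qed.

Lemma uniq_level_points [cs] : uniq cs ->
    {in cs &, forall c c', c < c' -> forall t, (1 <= t <= m)%N -> c' - c != t%:R} ->
  uniq (level_points cs).
Proof.
move=> cs_uniq cs_generic; apply: allpairs_uniq => //; first exact: iota_uniq.
have no_tie c c' t t' : c \in cs -> c' \in cs -> c < c' ->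
    t \in index_iota 1 m.+1 -> t' \in index_iota 1 m.+1 -> c + t%:R != c' + t'%:R.
  rewrite !mem_index_iota => c_in c'_in c_lt /andP[t1 tm] /andP[t'1 t'm].
  apply/eqP => eq_ct; have t'_lt : (t' < t)%N by rewrite -(ltr_nat R); lra.
  have := cs_generic c c' c_in c'_in c_lt (t - t')%N ltac:(lia).
  by rewrite natrB ?(ltnW t'_lt) //; apply/negP; rewrite negbK; apply/eqP; lra.
move=> [c t] [c' t'] /allpairsP[[c1 t1] /= [c1_in t1_in [-> ->]]].
move=> /allpairsP[[c2 t2] /= [c2_in t2_in [-> ->]]] /= eq_ct.
have [c_lt | c_gt | c_eq] := ltgtP c1 c2.
- by move: (no_tie _ _ _ _ c1_in c2_in c_lt t1_in t2_in); rewrite eq_ct eqxx.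
- by move: (no_tie _ _ _ _ c2_in c1_in c_gt t2_in t1_in); rewrite eq_ct eqxx.
- by move: eq_ct; rewrite c_eq => /addrI /eqP; rewrite eqr_nat => /eqP ->.
Qed.

End LevelPoints.

Section ShiRows.
Context {R : realFieldType} (m n : nat).
Implicit Types (y : nat -> R).

(* [y] stands for the coordinates of a point [x], so that [y i - y j.+1] is
   [<alpha_ij, x>]; only the rows [i >= a] are constrained. *)
Definition generic_rows (a : nat) y :=
  forall i j, (a <= i)%N -> (i <= j < n)%N ->
    0 < y i - y j.+1 /\ forall t, (t <= m)%N -> y i - y j.+1 != t%:R.

Local Notation level y i j := (levels_below m (y i - y j.+1)).

Definition row_levels y i := (\sum_(i <= j < n) level y i j)%N.

Lemma generic_rows_lt [a y i j] : generic_rows a y -> (a <= i <= j)%N -> (j < n)%N ->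
  y j.+1 < y i.
Proof.
by move=> gy /andP[a_i i_j] j_n; have [+ _] := gy i j a_i ltac:(lia); rewrite subr_gt0.
Qed.

Lemma generic_rows_neq [a y i j] t : generic_rows a y -> (a <= i <= j)%N -> (j < n)%N ->
  (t <= m)%N -> y i - y j.+1 != t%:R.
Proof. by move=> gy /andP[a_i i_j] j_n; have [_] := gy i j a_i ltac:(lia); apply. Qed.

Lemma no_crossing [y y' i j1 j2] : generic_rows 0 y -> generic_rows 0 y' ->
    (forall i' j, (i < i' <= j)%N -> (j < n)%N -> level y i' j = level y' i' j) ->
    (i <= j1 < j2)%N -> (j2 < n)%N ->
  (level y' i j1 < level y i j1)%N -> (level y i j2 < level y' i j2)%N -> False.
Proof.
move=> gy gy' below /andP[i_j1 j1_j2] j2_n lt1 lt2.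
set t1 := level y i j1 in lt1; set t2 := level y' i j2 in lt2.
have /andP[t1_pos t1_m] : (1 <= t1 <= m)%N by rewrite levels_below_le; lia.
have /andP[t2_pos t2_m] : (1 <= t2 <= m)%N by rewrite levels_below_le; lia.
have v1 : t1%:R < y i - y j1.+1 by rewrite -(levels_belowE m) ?t1_pos.
have v1' : y' i - y' j1.+1 < t1%:R.
  by rewrite -(levels_below_ltE m) ?t1_pos ?(generic_rows_neq _ gy') //; lia.
have v2 : y i - y j2.+1 < t2%:R.
  by rewrite -(levels_below_ltE m) ?t2_pos ?(generic_rows_neq _ gy) //; lia.
have v2' : t2%:R < y' i - y' j2.+1 by rewrite -(levels_belowE m) ?t2_pos.
have w_pos : y j2.+1 < y j1.+1 by apply: (generic_rows_lt gy); lia.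
have t1_lt_t2 : (t1 < t2)%N by rewrite -(ltr_nat R); lra.
have d_range : (1 <= t2 - t1 <= m)%N by lia.
have dR : (t2 - t1)%:R = t2%:R - t1%:R :> R by rewrite natrB // ltnW.
have : ~~ (t2 - t1 <= level y j1.+1 j2)%N by rewrite levels_belowE // dR -leNgt; lra.
by rewrite below ?levels_belowE // ?dR; [lra | lia].
Qed.

Lemma row_levels_ge y y' i : generic_rows 0 y -> generic_rows 0 y' ->
    (forall i' j, (i < i' <= j)%N -> (j < n)%N -> level y i' j = level y' i' j) ->
    row_levels y i = row_levels y' i ->
  forall j, (i <= j < n)%N -> (level y' i j <= level y i j)%N.
Proof.
move=> gy gy' below rows_eq j2 j2_range; rewrite leqNgt; apply/negP => lt2.
have le_row j : (i <= j < n)%N -> (level y i j <= level y' i j)%N.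
  move=> /andP[i_j j_n]; rewrite leqNgt; apply/negP => lt1.
  have [j_j2 | j2_j | j_eq] := ltngtP j j2; last by move: lt1 lt2; rewrite j_eq; lia.
    by apply: (no_crossing gy gy' below _ _ lt1 lt2); lia.
  apply: (no_crossing gy' gy _ _ j_n lt2 lt1); last by lia.
  by move=> i' j' ? ?; rewrite below.
by move: (ltn_sum_nat j2_range le_row lt2); rewrite -/(row_levels y i) rows_eq ltnn.
Qed.

Lemma levels_eq_of_row_levels y y' : generic_rows 0 y -> generic_rows 0 y' ->
    (forall i, (i < n)%N -> row_levels y i = row_levels y' i) ->
  forall i j, (i <= j < n)%N -> level y i j = level y' i j.
Proof.
move=> gy gy' rows_eq.
suff agree k i j : (n - k <= i <= j)%N -> (j < n)%N -> level y i j = level y' i j.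
  by move=> i j /andP[i_j j_n]; apply: (agree n) => //; lia.
elim: k i j => [|k IHk] i j range j_n; first by lia.
have below i' j' : (i < i' <= j')%N -> (j' < n)%N -> level y i' j' = level y' i' j'.
  by move=> ? ?; apply: IHk => //; lia.
have row_eq := rows_eq i ltac:(lia).
apply/eqP; rewrite eqn_leq !row_levels_ge //; try lia.
by move=> i' j' ? ?; rewrite below.
Qed.

Lemma row_levels_le y i : (row_levels y i <= m * (n - i))%N.
Proof.
apply: (@leq_trans (\sum_(i <= j < n) m)); last by rewrite sum_nat_const_nat mulnC.
by apply: leq_sum => j _; apply: levels_below_le.
Qed.

Lemma row_levels_succ_le y i : y i.+1 <= y i -> (row_levels y i.+1 <= row_levels y i)%N.
Proof.
move=> y_succ; rewrite /row_levels.
have [i_n | n_i] := ltnP i n; last by rewrite big_geq // leqW.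
rewrite [X in (_ <= X)%N]big_ltn //; apply: leq_trans (leq_addl _ _).
by apply: leq_sum => j _; apply: le_levels_below; lra.
Qed.

Lemma sorted_row_levels y : generic_rows 0 y ->
  sorted geq [seq row_levels y i | i <- iota 0 n].
Proof.
move=> gy; have mono : {homo row_levels y : i j / (i < j)%N >-> geq i j}.
  move=> i j /ltnW; apply: (@homo_leq _ _ (fun a b => b <= a)%N) => [//|b a c b_a c_b|k].
    exact: leq_trans c_b b_a.
  have [k_n | n_k] := ltnP k n; last by rewrite /row_levels big_geq // leqW.
  by apply/row_levels_succ_le/ltW/(generic_rows_lt gy); rewrite ?leqnn.
exact: homo_sorted mono _ (iota_ltn_sorted 0 n).
Qed.

Lemma eq_row_levels y y' i : (forall b, (i <= b)%N -> y b = y' b) ->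
  row_levels y i = row_levels y' i.
Proof. by move=> eq_y; apply: eq_big_nat => j /andP[i_j _]; rewrite !eq_y //; lia. Qed.

(* The values of [y a] at which [row_levels y a] jumps. *)
Definition row_points y a := level_points m [seq y j.+1 | j <- index_iota a n].

Lemma count_row_points y a u : count (fun z => z < u) (row_points y a) =
  (\sum_(a <= j < n) levels_below m (u - y j.+1))%N.
Proof. by rewrite count_level_points big_map. Qed.

Lemma uniq_row_points [y a] : generic_rows a.+1 y -> uniq (row_points y a).
Proof.
move=> gy; have lt_y j j' : (a <= j < j')%N -> (j' < n)%N -> y j'.+1 < y j.+1.
  by move=> ? ?; apply: (generic_rows_lt gy); lia.
apply: uniq_level_points.
  rewrite map_inj_in_uniq ?iota_uniq // => j j'; rewrite !mem_index_iota => ? ? eq_y.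
  have [j_j' | j'_j | //] := ltngtP j j'.
    by move: (lt_y j j' ltac:(lia) ltac:(lia)); rewrite eq_y ltxx.
  by move: (lt_y j' j ltac:(lia) ltac:(lia)); rewrite eq_y ltxx.
move=> _ _ /mapP[j j_in ->] /mapP[j' j'_in ->] lt_c t /andP[_ t_m].
move: j_in j'_in; rewrite !mem_index_iota => ? ?.
have [j_j' | j'_j | j_eq] := ltngtP j j'; last by move: lt_c; rewrite j_eq ltxx.
  by move: lt_c; rewrite ltNge ltW // lt_y //; lia.
by apply: (generic_rows_neq _ gy); lia.
Qed.

Lemma notin_row_points [y a] : (a < n)%N -> generic_rows a.+1 y -> y a.+1 \notin row_points y a.
Proof.
move=> a_n gy; apply/negP => /allpairsP[[c t] /= [/mapP[j j_in ->] t_in eq_y]].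
move: j_in t_in; rewrite !mem_index_iota => ? ?.
have [a_j | j_a | a_eq] := ltngtP a j; [|lia|].
  have a1_range : (a.+1 <= a.+1 <= j)%N by rewrite leqnn.
  by move/eqP: (generic_rows_neq t gy a1_range ltac:(lia) ltac:(lia)); apply; lra.
have : (t%:R : R) == 0 by apply/eqP; rewrite -a_eq in eq_y; lra.
by rewrite pnatr_eq0; lia.
Qed.

Lemma generic_rows_extend [y a k] : (a < n)%N -> generic_rows a.+1 y ->
    (row_levels y a.+1 <= k <= m * (n - a))%N ->
  exists y', [/\ generic_rows a y', row_levels y' a = k & forall b, (a < b)%N -> y' b = y b].
Proof.
move=> a_n gy k_range.
have count_y : count (fun z => z < y a.+1) (row_points y a) = row_levels y a.+1.
  by rewrite count_row_points big_ltn // subrr levels_below_le1 ?ler01.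
have [|u [y_lt_u u_notin count_u]] :=
    exists_count_lt k (uniq_row_points gy) (notin_row_points a_n gy).
  by rewrite count_y size_allpairs size_map !size_iota subn1 mulnC.
exists (fun b => if b == a then u else y b); split; last by move=> b a_b; rewrite gtn_eqF.
- move=> i j a_i /andP[i_j j_n]; rewrite (@gtn_eqF a j.+1); last by lia.
  have [i_eq | i_neq] := eqVneq i a; last by apply: gy => //; lia.
  subst i; have y_le : y j.+1 <= y a.+1.
    have [a_j | j_le_a] := ltnP a j; first by apply/ltW/(generic_rows_lt gy); lia.
    by have -> : j = a by lia.
  have u_pos : 0 < u - y j.+1 by rewrite subr_gt0 (le_lt_trans y_le).
  split => // -[|t] t_m; first by rewrite gt_eqF.
  apply: contraNneq u_notin => eq_u; rewrite -(subrK (y j.+1) u) eq_u addrC.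
  by apply: allpairs_f; [apply: map_f | ]; rewrite mem_index_iota; lia.
- rewrite /row_levels eqxx -count_u count_row_points.
  by apply: eq_big_nat => j /andP[a_j _]; rewrite gtn_eqF.
Qed.

Lemma exists_generic_rows [lam : seq nat] : size lam = n -> sorted geq lam ->
    (forall i, (i < n)%N -> (nth 0%N lam i <= m * (n - i))%N) ->
  exists y, generic_rows 0 y /\ forall i, (i < n)%N -> row_levels y i = nth 0%N lam i.
Proof.
move=> lam_size lam_sorted lam_le.
suff build k : (k <= n)%N -> exists y, generic_rows (n - k)%N y /\
    forall i, (n - k <= i < n)%N -> row_levels y i = nth 0%N lam i.
  by have [y] := build n (leqnn n); rewrite subnn; exists y.
elim: k => [_ | k IHk k_lt_n].
  by exists (fun=> 0); split => [i j | i]; lia.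
have [y [gy rows_y]] := IHk (ltnW k_lt_n).
set a := (n - k.+1)%N; have a_n : (a < n)%N by lia.
rewrite (_ : (n - k = a.+1)%N) in gy rows_y; last by lia.
have lam_range : (row_levels y a.+1 <= nth 0%N lam a <= m * (n - a))%N.
  rewrite lam_le ?andbT //.
  have [a1_n | n_a1] := ltnP a.+1 n; last by rewrite /row_levels big_geq.
  rewrite rows_y ?a1_n ?leqnn //.
  by apply: (sorted_ltn_nth (rev_trans leq_trans) 0%N lam_sorted); rewrite ?inE ?lam_size.
have [y' [gy' row_a agree]] := generic_rows_extend a_n gy lam_range.
exists y'; split => // i /andP[a_i i_n].
have [a_eq | a_neq_i] := eqVneq a i; first by rewrite -a_eq.
have a_lt_i : (a < i)%N by rewrite ltn_neqAle a_neq_i.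
rewrite -rows_y ?a_lt_i //; apply: eq_row_levels => b i_b; apply: agree.
exact: leq_trans i_b.
Qed.

End ShiRows.

Section DominantRegions.
Variables (R : realType) (n m : nat).
Local Notation V := 'rV[R]_(n.+1).
Local Notation complement := (cat_complement R n m).
Local Notation component := (connected_component complement).
Local Notation root_pair := (root_pair R n).

Definition coords (x : V) (a : nat) : R := x ord0 (inord a).

Lemma continuous_root_pair i j : continuous (fun x : V => root_pair x i j).
Proof.
move=> x; apply: (@continuousB _ _ _ (coords^~ i) (coords^~ j.+1)); exact: coord_continuous.
Qed.

Lemma component_root_pair_gt [x0 x z i j t] : component x0 x -> component x0 z ->
  (t <= m)%N -> (i <= j < n)%N -> t%:R < root_pair x i j -> t%:R < root_pair z i j.
Proof.
move=> x_in z_in t_m /andP[i_j j_n].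
have avoid w : component x0 w -> root_pair w i j != t%:R.
  by move=> /connected_component_sub[_ avoid]; apply/eqP; apply: avoid.
exact: (connected_avoid_gt (continuous_root_pair i j)
  (@component_connected _ complement x0) avoid x_in z_in).
Qed.

Lemma shi_k_component x i j : complement x -> (i <= j < n)%N ->
  shi_k R n m (component x) i j = levels_below m (root_pair x i j).
Proof.
move=> x_in ij_range; apply: eq_big_nat => t /andP[t1 t_m]; congr nat_of_bool.
have x_x := connected_component_refl x_in.
apply/asboolP/idP => [[z z_in]|]; last by exists x.
by apply: (component_root_pair_gt z_in x_x _ ij_range); rewrite -ltnS.
Qed.

Lemma phi_shi_component x : complement x ->
  phi_shi R n m (component x) = [seq row_levels m n (coords x) i | i <- iota 0 n].
Proof.
move=> x_in; apply/eq_in_map => i; rewrite mem_iota add0n => /andP[_ i_n].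
by apply: eq_big_nat => j ij_range; apply: shi_k_component.
Qed.

Lemma dominant_region_generic S : dominant_regions R n m S ->
  exists x, [/\ complement x, S = component x & generic_rows m n 0 (coords x)].
Proof.
case=> -[x [x_in ->]] dominant; exists x; split => // i j _ /andP[i_j j_n].
have [_ avoid] := x_in; split; last by move=> t t_m; apply/eqP; apply: avoid.
have [_ nonneg] := dominant x (connected_component_refl x_in).
by rewrite lt_neqAle eq_sym nonneg // andbT; apply/eqP; apply: (avoid i j 0%N).
Qed.

Lemma segment_sub_complement [x1 x2] : complement x1 -> complement x2 ->
    generic_rows m n 0 (coords x1) -> generic_rows m n 0 (coords x2) ->
    (forall i j, (i <= j < n)%N ->
       levels_below m (root_pair x1 i j) = levels_below m (root_pair x2 i j)) ->
  [set x1 + s *: (x2 - x1) | s in `[0%R, 1%R]] `<=` complement.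
Proof.
move=> [V1 _] [V2 _] g1 g2 same_levels _ [s /= s_in <-].
have s01 : 0 <= s <= 1 by move: s_in; rewrite in_itv.
have entry a : (x1 + s *: (x2 - x1)) ord0 a = x1 ord0 a + s * (x2 ord0 a - x1 ord0 a).
  by rewrite !mxE.
split.
  rewrite /Vspace /=; under eq_bigr do rewrite entry.
  by rewrite big_split /= -mulr_sumr sumrB V1 V2 subrr mulr0 addr0.
move=> i j k i_j j_n k_m.
have -> : root_pair (x1 + s *: (x2 - x1)) i j =
    root_pair x1 i j + s * (root_pair x2 i j - root_pair x1 i j).
  by rewrite /Defs.root_pair !entry; lra.
have [pos1 avoid1] := g1 i j (leq0n _) ltac:(lia).
have [pos2 avoid2] := g2 i j (leq0n _) ltac:(lia).
case: k k_m => [|k] k_m.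
  by apply/eqP; rewrite gt_eqF // convex_gt.
have same_side : (k.+1%:R < root_pair x1 i j) = (k.+1%:R < root_pair x2 i j).
  by rewrite -!(levels_belowE m) ?same_levels //; lia.
apply/eqP; have [gt1 | le1] := ltP k.+1%:R (root_pair x1 i j).
  by rewrite gt_eqF // convex_gt // -same_side.
rewrite lt_eqF // convex_lt //.
  by rewrite lt_neqAle le1 andbT; apply: avoid1.
by rewrite lt_neqAle leNgt -same_side -leNgt le1 andbT; apply: avoid2.
Qed.

Lemma component_eq_of_levels [x1 x2] : complement x1 -> complement x2 ->
    generic_rows m n 0 (coords x1) -> generic_rows m n 0 (coords x2) ->
    (forall i j, (i <= j < n)%N ->
       levels_below m (root_pair x1 i j) = levels_below m (root_pair x2 i j)) ->
  component x1 = component x2.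
Proof.
move=> x1_in x2_in g1 g2 same_levels; apply: same_connected_component.
have := connected_component_max _ (segment_sub_complement x1_in x2_in g1 g2 same_levels).
move=> /(_ x1) sub_component; apply: sub_component.
- by exists 0; [rewrite /= in_itv /= lexx ler01 | rewrite scale0r addr0].
- exact: (@connected_segment R V x1 x2).
- by exists 1; [rewrite /= in_itv /= lexx ler01 | rewrite scale1r subrKC].
Qed.

Lemma exists_root_pairs (y : nat -> R) : exists x : V,
  Vspace R n x /\ forall i j, (i <= j < n)%N -> root_pair x i j = y i - y j.+1.
Proof.
pose c := (\sum_(a < n.+1) y a) / n.+1%:R.
exists (\row_(a < n.+1) (y a - c)); split.
  rewrite /Vspace /=; under eq_bigr do rewrite mxE.
  by rewrite sumrB sumr_const card_ord -mulr_natr /c divfK ?subrr.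
move=> i j /andP[i_j j_n]; rewrite /Defs.root_pair !mxE !inordK; lia || lra.
Qed.

Lemma phi_shi_fun : set_fun (dominant_regions R n m) (shi_partitions n m) (phi_shi R n m).
Proof.
move=> S /dominant_region_generic[x [x_in -> gx]].
rewrite phi_shi_component //; split; first by rewrite size_map size_iota.
split; first exact: sorted_row_levels.
by move=> i i_n; rewrite (nth_map 0%N) ?size_iota // nth_iota // row_levels_le.
Qed.

Lemma phi_shi_inj : set_inj (dominant_regions R n m) (phi_shi R n m).
Proof.
move=> S1 S2; rewrite !in_setE => /dominant_region_generic[x1 [x1_in -> g1]].
move=> /dominant_region_generic[x2 [x2_in -> g2]]; rewrite !phi_shi_component // => eq_phi.
apply: component_eq_of_levels => //; apply: levels_eq_of_row_levels => // i i_n.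
have := congr1 (fun l => nth 0%N l i) eq_phi.
by rewrite /= !(nth_map 0%N) ?size_iota // nth_iota.
Qed.

Lemma phi_shi_surj : set_surj (dominant_regions R n m) (shi_partitions n m) (phi_shi R n m).
Proof.
move=> lam [lam_size [lam_sorted lam_le]].
have [y [gy rows_y]] := exists_generic_rows (R := R) m n lam_size lam_sorted lam_le.
have [x [Vx rp_x]] := exists_root_pairs y.
have x_in : complement x.
  split => // i j k i_j j_n k_m; rewrite rp_x ?i_j //.
  have ij_range : (0 <= i <= j)%N by rewrite i_j.
  exact/eqP/(generic_rows_neq m n k gy ij_range j_n k_m).
have x_x := connected_component_refl x_in.
exists (component x).
  split; first by exists x.
  move=> z z_in; split; first by case: (connected_component_sub z_in).
  move=> i j i_j j_n; apply/ltW/(component_root_pair_gt x_x z_in (leq0n m)); first by rewrite i_j.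
  by rewrite rp_x ?i_j // subr_gt0 (generic_rows_lt m n gy) ?i_j.
rewrite phi_shi_component // -[RHS](mkseq_nth 0%N lam) lam_size; apply/eq_in_map => i.
rewrite mem_iota add0n => /andP[_ i_n]; rewrite -rows_y //.
by apply: eq_big_nat => j ij_range; rewrite [coords x i - _]rp_x.
Qed.

End DominantRegions.

Theorem theorem4p1 (R : realType) (n m : nat) :
  (0 < n)%N -> (0 < m)%N ->
  set_bij (dominant_regions R n m) (shi_partitions n m) (phi_shi R n m).
Proof.
(* The bijection holds for [n = 0] and [m = 0] as well. *)
by move=> _ _; split; [exact: phi_shi_fun | exact: phi_shi_inj | exact: phi_shi_surj].
Qed.
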